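(* Let $[r:s]\in\mathbb{P}^1$, $X=\{u_1x=v_1y,\ u_2z=v_2t,\ w^2+r(x+y)^2+r(z+t)^2=(2s+2)(xt+yz)+(2s-2)(xz+yt)\}\subset\mathbb{P}^1\times\mathbb{P}^1\times\mathbb{P}^4$, and let $\mathbf{G}\subset\mathrm{Aut}(X)$ be generated by $\Gamma$ and $\tau_1,\tau_2,\tau_3$. If $[r:s]\neq[\pm1:1]$, then $X$ has no $\mathbf{G}$-fixed points. If $[r:s]=[\pm1:1]$, then the only $\mathbf{G}$-fixed point of $X$ is the singular point $([1:1],[1:1],[1:1:\pm1:\pm1:0])$ (with the same sign as in $[r:s]$).
   Context: Coordinates are $([u_1:v_1],[u_2:v_2],[x:y:z:t:w])$. $\tau_1\colon([u_1:v_1],[u_2:v_2],[x:y:z:t:w])\mapsto([v_1:u_1],[v_2:u_2],[y:x:t:z:w])$, $\tau_2\colon\mapsto([u_2:v_2],[u_1:v_1],[z:t:x:y:w])$, $\tau_3\colon\mapsto([u_1:v_1],[u_2:v_2],[x:y:z:t:-w])$. $\Gamma\cong\mathbb{C}^\ast$ is the subgroup of $\mathrm{Aut}(X)$ obtained by lifting to $X$ (via the blow up $X\to Q$ of the quadric $Q\subset\mathbb{P}^4$ with the same equation along $Q\cap\{x=y=0\}$ and $Q\cap\{z=t=0\}$) the action on $\mathbb{P}^4$ by the matrices $$\begin{pmatrix}\frac{1+\lambda}{2}&\frac{1-\lambda}{2}&0&0&0\\ \frac{1-\lambda}{2}&\frac{1+\lambda}{2}&0&0&0\\ 0&0&\frac{\lambda+1}{2\lambda}&\frac{\lambda-1}{2\lambda}&0\\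 0&0&\frac{\lambda-1}{2\lambda}&\frac{\lambda+1}{2\lambda}&0\\ 0&0&0&0&1\end{pmatrix},\quad\lambda\in\mathbb{C}^\ast,$$ acting on $[x:y:z:t:w]$, which preserves $Q$ and both planes. *)

From mathcomp Require Import all_boot all_algebra.
From mathcomp Require Import complex reals.
Set Implicit Arguments. Unset Strict Implicit. Unset Printing Implicit Defensive.
Import GRing.Theory.
Local Open Scope ring_scope.

Section Defs.
Variable R : realType.
Local Notation C := (R[i]).

(* Homogeneous coordinates of a point ([u1:v1],[u2:v2],[x:y:z:t:w])
   of P^1 x P^1 x P^4. *)
Record pt := Pt { pu1 : C; pv1 : C; pu2 : C; pv2 : C;
                  px : C; py : C; pz : C; pt_ : C; pw : C }.

Definition valid (p : pt) : Prop :=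
  ~ (pu1 p = 0 /\ pv1 p = 0) /\ ~ (pu2 p = 0 /\ pv2 p = 0) /\
  ~ (px p = 0 /\ py p = 0 /\ pz p = 0 /\ pt_ p = 0 /\ pw p = 0).

Definition peq (p q : pt) : Prop :=
  exists a b c : C, a != 0 /\ b != 0 /\ c != 0 /\
    pu1 q = a * pu1 p /\ pv1 q = a * pv1 p /\
    pu2 q = b * pu2 p /\ pv2 q = b * pv2 p /\
    px q = c * px p /\ py q = c * py p /\ pz q = c * pz p /\
    pt_ q = c * pt_ p /\ pw q = c * pw p.

Definition F1 (p : pt) : C := pu1 p * px p - pv1 p * py p.
Definition F2 (p : pt) : C := pu2 p * pz p - pv2 p * pt_ p.
Definition F3 (r s : C) (p : pt) : C :=
  let: Pt _ _ _ _ x y z t w := p in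
  w ^+ 2 + r * (x + y) ^+ 2 + r * (z + t) ^+ 2
  - ((2 * s + 2) * (x * t + y * z) + (2 * s - 2) * (x * z + y * t)).

Definition onX (r s : C) (p : pt) : Prop :=
  valid p /\ F1 p = 0 /\ F2 p = 0 /\ F3 r s p = 0.

Definition jac_row (r s : C) (p : pt) (i : 'I_3) : 9.-tuple C :=
  let: Pt u1 v1 u2 v2 x y z t w := p in
  match val i with
  | 0%N => [tuple x; - y; 0; 0; u1; - v1; 0; 0; 0]
  | 1%N => [tuple 0; 0; z; - t; 0; 0; u2; - v2; 0]
  | _ => [tuple 0; 0; 0; 0;
      2 * r * (x + y) - (2 * s + 2) * t - (2 * s - 2) * z;
      2 * r * (x + y) - (2 * s + 2) * z - (2 * s - 2) * t;
      2 * r * (z + t) - (2 * s + 2) * y - (2 * s - 2) * x;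
      2 * r * (z + t) - (2 * s + 2) * x - (2 * s - 2) * y;
      2 * w]
  end.

Definition jacobian (r s : C) (p : pt) : 'M[C]_(3, 9) :=
  \matrix_(i < 3, j < 9) tnth (jac_row r s p i) j.

(* p is a singular point of the threefold X (complete intersection of
   three hypersurfaces): p lies on X and the Jacobian has rank < 3. *)
Definition singular_pt (r s : C) (p : pt) : Prop :=
  onX r s p /\ (\rank (jacobian r s p) < 3)%N.

Definition tau1 (p : pt) : pt :=
  let: Pt u1 v1 u2 v2 x y z t w := p in Pt v1 u1 v2 u2 y x t z w.
Definition tau2 (p : pt) : pt :=
  let: Pt u1 v1 u2 v2 x y z t w := p in Pt u2 v2 u1 v1 z t x y w.
Definition tau3 (p : pt) : pt :=
  let: Pt u1 v1 u2 v2 x y z t w := p in Pt u1 v1 u2 v2 x y z t (- w).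

(* the element gamma_l of Gamma (l <> 0): the given matrix on P^4, lifted
   to the P^1 factors (the point [u1:v1] corresponds to the line [x:y]=[v1:u1],
   [u2:v2] to [z:t]=[v2:u2]; the lift acts on these by the same 2x2 blocks) *)
Definition gamma (l : C) (p : pt) : pt :=
  let: Pt u1 v1 u2 v2 x y z t w := p in
  Pt (((1 - l) * v1 + (1 + l) * u1) / 2)
     (((1 + l) * v1 + (1 - l) * u1) / 2)
     (((l - 1) * v2 + (l + 1) * u2) / (2 * l))
     (((l + 1) * v2 + (l - 1) * u2) / (2 * l))
     (((1 + l) * x + (1 - l) * y) / 2)
     (((1 - l) * x + (1 + l) * y) / 2)
     (((l + 1) * z + (l - 1) * t) / (2 * l))
     (((l - 1) * z + (l + 1) * t) / (2 * l))
     w.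

(* Since the set of
   generators is closed under inverses (gamma_l^-1 = gamma_(1/l), tau_i^2 = 1),
   the generated group is the closure under identity and composition. *)
Inductive inG : (pt -> pt) -> Prop :=
  | inG_id : inG id
  | inG_gamma l f : l != 0 -> inG f -> inG (gamma l \o f)
  | inG_tau1 f : inG f -> inG (tau1 \o f)
  | inG_tau2 f : inG f -> inG (tau2 \o f)
  | inG_tau3 f : inG f -> inG (tau3 \o f).

Definition Gfixed (p : pt) : Prop := forall g, inG g -> peq p (g p).

End Defs.

From mathcomp Require Import all_boot all_algebra.
From mathcomp Require Import complex reals ring.
Set Implicit Arguments.
Unset Strict Implicit.
Unset Printing Implicit Defensive.

Import GRing.Theory Num.Theory.
Local Open Scope ring_scope.

(* gamma_l multiplies x - y by l and z - t by 1/l, while tau2 exchanges the two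
   differences; a G-fixed point therefore has x = y and z = t.  Then tau2 gives
   [z : x] = [k : 1] with k^2 = 1, tau3 gives w = 0, and the quadric equation
   becomes 8 x^2 (r - k s) = 0, so r = k s and the point is
   ([1:1],[1:1],[1:1:k:k:0]).  Conversely every generator maps the family of
   points ([a:a],[b:b],[c:c:ce:ce:0]) into itself, so these points are fixed. *)

Lemma sqr_eq1_neq0 (F : nzRingType) (x : F) : x ^+ 2 = 1 -> x != 0.
Proof. by apply: contra_eq_neq => ->; rewrite expr0n eq_sym oner_eq0. Qed.

Lemma rank_lt_of_row_eq0 (F : fieldType) m n (A : 'M[F]_(m, n)) (i : 'I_m) :
  row i A = 0 -> (\rank A < m)%N.
Proof.
move=> Ai0; rewrite ltn_neqAle rank_leq_row andbT.
apply/negP => /(mulmx_free_eq0 ('e_i : 'rV_m)).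
rewrite -rowE Ai0 eqxx => /esym /eqP /matrixP /(_ 0 i).
by rewrite !mxE !eqxx => /eqP; rewrite oner_eq0.
Qed.

Section FixedPoints.
Variable R : realType.
Local Notation C := R[i].
Implicit Types (p : pt R) (r s e k : C).

Lemma Gfixed_P4 p g : Gfixed p -> inG g ->
  exists2 c : C, c != 0 & [/\ px (g p) = c * px p, py (g p) = c * py p,
    pz (g p) = c * pz p, pt_ (g p) = c * pt_ p & pw (g p) = c * pw p].
Proof.
move=> pG /pG [_ [_ [c [_ [_ [c0 [_ [_ [_ [_ [gx [gy [gz [gt gw]]]]]]]]]]]]]].
by exists c.
Qed.

Lemma Gfixed_diag p : Gfixed p -> py p = px p /\ pt_ p = pz p.
Proof.
case: p => u1 v1 u2 v2 x y z t w pG /=.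
have two0 : (2 : C) != 0 by rewrite pnatr_eq0.
have [c _ [/= gx gy gz gt _]] := Gfixed_P4 pG (inG_gamma two0 (inG_id R)).
have [k _ [/= sx sy sz st _]] := Gfixed_P4 pG (inG_tau2 (inG_id R)).
have eig_xy : (x - y) * (c - 2) = 0.
  transitivity (c * x - c * y - 2 * (x - y)); first ring.
  by rewrite -gx -gy; field.
have eig_zt : (z - t) * (2 * c - 1) = 0.
  transitivity (2 * (c * z - c * t) - (z - t)); first ring.
  by rewrite -gz -gt; field.
have swap : x - y = k * (z - t) by rewrite {1}sz st; ring.
have xy : x - y = 0.
  apply: (mulfI (_ : 3 != 0)); first by rewrite pnatr_eq0.
  transitivity (k * ((z - t) * (2 * c - 1)) - 2 * ((x - y) * (c - 2))).
    by rewrite swap; ring.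
  by rewrite eig_xy eig_zt !mulr0 subr0.
have zt : z - t = 0 by rewrite sx sy -mulrBr xy mulr0.
by split; apply/eqP; rewrite eq_sym -subr_eq0 ?xy ?zt.
Qed.

Lemma Gfixed_w0 p : Gfixed p -> px p != 0 -> pw p = 0.
Proof.
case: p => u1 v1 u2 v2 x y z t w pG /= x0.
have [m _ [/= mx _ _ _ /= mw]] := Gfixed_P4 pG (inG_tau3 (inG_id R)).
have m1 : m = 1 by apply: (mulIf x0); rewrite -mx mul1r.
by apply/eqP; rewrite -eqNr mw m1 mul1r.
Qed.

Lemma F3_diag r s k u1 v1 u2 v2 x : k ^+ 2 = 1 ->
  F3 r s (Pt u1 v1 u2 v2 x x (k * x) (k * x) 0) = 8 * x ^+ 2 * (r - k * s).
Proof.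
move=> k2.
transitivity (8 * x ^+ 2 * (r - k * s) + 4 * r * x ^+ 2 * (k ^+ 2 - 1)).
  by rewrite /F3; ring.
by rewrite k2 subrr mulr0 addr0.
Qed.

Lemma Gfixed_onX_coords r s p : onX r s p -> Gfixed p ->
  exists2 k, k ^+ 2 = 1 &
    [/\ px p != 0, py p = px p, pz p = k * px p, pt_ p = k * px p & pw p = 0].
Proof.
case: p => u1 v1 u2 v2 x y z t w [[_ [_ nz]] [_ [_ F3p]]] pG.
have [/= yx tz] := Gfixed_diag pG.
have [k _ [/= zk _ xk _ _]] := Gfixed_P4 pG (inG_tau2 (inG_id R)).
have x0 : x != 0.
  apply: contra_notN nz => /eqP x0.
  have z0 : z = 0 by rewrite zk x0 mulr0.
  have w0 : w = 0.
    have : w ^+ 2 = 0 by rewrite -F3p /F3 yx tz x0 z0; ring.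
    by move/eqP; rewrite expf_eq0 => /eqP.
  by rewrite /= yx tz x0 z0 w0.
have /= w0 := Gfixed_w0 pG x0.
exists k; last by split; rewrite //= tz.
by apply: (mulIf x0); rewrite mul1r expr2 -mulrA -zk -xk.
Qed.

Definition sing_pt e : pt R := Pt 1 1 1 1 1 1 e e 0.

Lemma Gfixed_onX r s p : onX r s p -> Gfixed p ->
  exists2 k, k ^+ 2 = 1 & r = k * s /\ peq p (sing_pt k).
Proof.
move=> pX pG; have [k k2 [x0 yx zk tk w0]] := Gfixed_onX_coords pX pG.
exists k => //; case: p pX {pG} x0 yx zk tk w0 => u1 v1 u2 v2 x y z t w /=.
move=> pX x0 ? ? ? ?; subst y z t w.
have [[nz1 [nz2 _]] [F1p [F2p F3p]]] := pX; rewrite /F1 /F2 /= in F1p F2p.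
have k0 := sqr_eq1_neq0 k2.
have uv1 : u1 = v1 by apply: (mulIf x0); apply/eqP; rewrite -subr_eq0 F1p.
have uv2 : u2 = v2.
  by apply: (mulIf (mulf_neq0 k0 x0)); apply/eqP; rewrite -subr_eq0 F2p.
subst v1 v2; split.
  move/eqP: F3p; rewrite F3_diag // !mulf_eq0 (negbTE x0) pnatr_eq0 subr_eq0 /=.
  by move/eqP.
have u10 : u1 != 0 by apply: contra_notN nz1 => /eqP.
have u20 : u2 != 0 by apply: contra_notN nz2 => /eqP.
exists u1^-1, u2^-1, x^-1; rewrite !invr_eq0 /= !mulVf //.
by rewrite mulrCA mulVf // mulr1 mulr0; do !split.
Qed.

Definition diag_pt e a b c : pt R := Pt a a b b c c (c * e) (c * e) 0.

Lemma gamma_diag_pt l e a b c :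
  l != 0 -> gamma l (diag_pt e a b c) = diag_pt e a b c.
Proof.
move=> l0; have two0 : (2 : C) != 0 by rewrite pnatr_eq0.
by congr Pt; field; rewrite ?mulf_neq0.
Qed.

Lemma tau2_diag_pt e a b c :
  e ^+ 2 = 1 -> tau2 (diag_pt e a b c) = diag_pt e b a (c * e).
Proof. by move=> e2; congr Pt; rewrite -mulrA -expr2 e2 mulr1. Qed.

Lemma inG_diag_pt e g : e ^+ 2 = 1 -> inG g ->
  exists a b c,
    [/\ a != 0, b != 0, c != 0 & g (diag_pt e 1 1 1) = diag_pt e a b c].
Proof.
move=> e2; have e0 := sqr_eq1_neq0 e2.
elim=> [|l f l0 _|f _|f _|f _]; first by exists 1, 1, 1; rewrite oner_neq0.
all: move=> [a [b [c [a0 b0 c0 /= ->]]]].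
- by exists a, b, c; rewrite gamma_diag_pt.
- by exists a, b, c.
- by exists b, a, (c * e); rewrite tau2_diag_pt // mulf_neq0.
- by exists a, b, c; rewrite /= oppr0.
Qed.

Lemma Gfixed_sing_pt e : e ^+ 2 = 1 -> Gfixed (sing_pt e).
Proof.
have -> : sing_pt e = diag_pt e 1 1 1 by rewrite /diag_pt mul1r.
move=> e2 g /(inG_diag_pt e2) [a [b [c [a0 b0 c0 ->]]]].
by exists a, b, c; rewrite /= !mulr1 mulr0 mul1r; do !split.
Qed.

Lemma onX_sing_pt r s e : e ^+ 2 = 1 -> r = e * s -> onX r s (sing_pt e).
Proof.
move=> e2 re; split; first by split; [|split]; case=> /eqP; rewrite oner_eq0.
do 2 (split; first exact: subrr).
have := F3_diag r s 1 1 1 1 1 e2; rewrite !mulr1 => ->.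
by rewrite re subrr mulr0.
Qed.

Lemma singular_sing_pt r s e :
  e ^+ 2 = 1 -> r = e * s -> singular_pt r s (sing_pt e).
Proof.
move=> e2 re; split; first exact: onX_sing_pt.
apply: (@rank_lt_of_row_eq0 _ _ _ _ 2); apply/rowP => j; rewrite !mxE re.
have /eqP := e2; rewrite sqrf_eq1 => /orP[] /eqP ->.
all: case: j => [[|[|[|[|[|[|[|[|[|j]]]]]]]]] hj] //.
all: by rewrite (tnth_nth 0) /=; ring.
Qed.

End FixedPoints.

Theorem lemma5p1 (R : realType) (r s : R[i]) (hrs : ~ (r = 0 /\ s = 0)) :
  ((r <> s /\ r <> - s) ->
     forall p : pt R, onX r s p -> ~ Gfixed p) /\
  (forall e : R[i], (e = 1 \/ e = -1) -> r = e * s ->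
     let P := Pt 1 1 1 1 1 1 e e 0 in
     onX r s P /\ Gfixed P /\ singular_pt r s P /\
     forall p : pt R, onX r s p -> Gfixed p -> peq p P).
Proof.
split.
  move=> [rNs rNNs] p pX pG; have [k /eqP k2 [rk _]] := Gfixed_onX pX pG.
  by move: k2; rewrite sqrf_eq1 => /orP[] /eqP k1; [apply: rNs | apply: rNNs];
    rewrite rk k1 ?mul1r ?mulN1r.
move=> e e1 re P.
have e2 : e ^+ 2 = 1.
  by apply/eqP; rewrite sqrf_eq1; case: e1 => ->; rewrite eqxx ?orbT.
split; first exact: onX_sing_pt.
split; first exact: Gfixed_sing_pt.
split; first exact: singular_sing_pt.
move=> p pX pG; have [k _ [rk pk]] := Gfixed_onX pX pG; rewrite /P.
have s0 : s != 0 by apply: contra_not_neq hrs => s0; rewrite re s0 mulr0.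
suff -> : e = k by exact: pk.
by apply: (mulIf s0); rewrite -re -rk.
Qed.
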